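(* Let $n\ge1$, let $V$ be a real symmetric positive-semidefinite $2n\times2n$ matrix, let $H$ be a real symmetric positive-definite $2n\times 2n$ matrix, and let $G$ be either $SL(2n)$ or $Sp(2n)$. Then \[ \inf_{X\in G}\operatorname{tr}(XVX^TH)=\lim_{\epsilon\to0^+}\ \inf_{X\in G}\operatorname{tr}\big(X(V+\epsilon\mathbb{I}_{2n})X^TH\big). \]
   Context: $SL(2n)$ is the group of real $2n\times2n$ matrices of determinant $1$; $Sp(2n)=\{S\in\mathbb{R}^{2n\times 2n}: S^TJS=J\}$ with $J=\begin{bmatrix}0 & \mathbb{I}_n\\ -\mathbb{I}_n & 0\end{bmatrix}$. *)

From HB Require Import structures.
From mathcomp Require Import all_boot all_order all_algebra.
From mathcomp Require Import all_classical all_reals all_analysis.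
Set Implicit Arguments. Unset Strict Implicit. Unset Printing Implicit Defensive.
Import Order.TTheory GRing.Theory Num.Theory.
Local Open Scope ring_scope.
Local Open Scope classical_set_scope.

Section Defs.
Variable R : realType.

Definition psd_mx (m : nat) (A : 'M[R]_m) : Prop :=
  A^T = A /\ forall v : 'cV[R]_m, 0 <= (v^T *m A *m v) 0 0.

Definition pd_mx (m : nat) (A : 'M[R]_m) : Prop :=
  A^T = A /\ forall v : 'cV[R]_m, v != 0 -> 0 < (v^T *m A *m v) 0 0.

Definition Jmx (n : nat) : 'M[R]_(n + n) :=
  block_mx 0 1%:M (- 1%:M) 0.

Definition SL_set (n : nat) : set 'M[R]_(n + n) := [set X | \det X = 1].

Definition Sp_set (n : nat) : set 'M[R]_(n + n) :=
  [set X | X^T *m Jmx n *m X = Jmx n].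

End Defs.

Inductive group_choice := G_SL | G_Sp.

Definition G_set {R : realType} (g : group_choice) (n : nat) : set 'M[R]_(n + n) :=
  match g with G_SL => @SL_set R n | G_Sp => @Sp_set R n end.

Definition trace_inf {R : realType} (g : group_choice) (n : nat)
    (V H : 'M[R]_(n + n)) : R :=
  inf [set \tr (X *m V *m X^T *m H) | X in @G_set R g n].

From mathcomp Require Import all_boot all_order all_algebra.
From mathcomp Require Import all_classical all_reals all_analysis.
From mathcomp Require Import lra.
Import Order.TTheory GRing.Theory Num.Theory.
Local Open Scope ring_scope.
Set Implicit Arguments. Unset Strict Implicit. Unset Printing Implicit Defensive.

(* For X in G, tr (X (V + eps I) X^T H) = f X + eps * h X with
   f X = tr (X V X^T H) and h X = tr (X X^T H), and both are nonnegative because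
   the trace of a product of two positive-semidefinite matrices is.  Hence
   inf (f + eps h) over G lies between inf f and f X + eps * h X for every X in G,
   and tends to inf f.
   Nonnegativity of tr (A K) is proved by induction on the size: a
   positive-definite A splits as a rank-one term through its first column plus
   its Schur complement, which is again positive definite; the semidefinite case
   follows by replacing A with A + delta I and letting delta go to 0. *)

Section ComRingMatrix.
Variable R : comPzRingType.

Definition qform m (A : 'M[R]_m) (v : 'cV[R]_m) : R := (v^T *m A *m v) 0 0.

Lemma qformD m (A B : 'M[R]_m) v : qform (A + B) v = qform A v + qform B v.
Proof. by rewrite /qform mulmxDr mulmxDl mxE. Qed.

Lemma qformZ m (A : 'M[R]_m) c v : qform (c *: A) v = c * qform A v.
Proof. by rewrite /qform -scalemxAr -scalemxAl mxE. Qed.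

Lemma qform_delta m (A : 'M[R]_m) i : qform A (delta_mx i 0) = A i i.
Proof. by rewrite /qform trmx_delta -rowE -colE !mxE. Qed.

Lemma qform_block_dr m1 m2 (S : 'M[R]_m2) (x : 'cV[R]_m1) w :
  qform (block_mx 0 0 0 S) (col_mx x w) = qform S w.
Proof.
by rewrite /qform tr_col_mx mul_row_block !mulmx0 !add0r mul_row_col mul0mx add0r.
Qed.

Lemma qform_col0 m1 m2 (K : 'M[R]_(m1 + m2)) w :
  qform K (col_mx 0 w) = qform (drsubmx K) w.
Proof.
rewrite /qform -{1}(submxK K) tr_col_mx trmx0 mul_row_block !mul0mx !add0r.
by rewrite mul_row_col mulmx0 add0r.
Qed.

Lemma mxtrace_block_dr_mul m1 m2 (S : 'M[R]_m2) (K : 'M[R]_(m1 + m2)) :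
  \tr (block_mx 0 0 0 S *m K) = \tr (S *m drsubmx K).
Proof.
by rewrite -{1}(submxK K) mulmx_block mxtrace_block !mul0mx !add0r mxtrace0 add0r.
Qed.

Lemma mxtrace_outer_mul m (u : 'cV[R]_m) (K : 'M[R]_m) :
  \tr (u *m u^T *m K) = qform K u.
Proof. by rewrite -mulmxA mxtrace_mulC trace_mx11. Qed.

Lemma qform_congr m n (A : 'M[R]_m) (X : 'M[R]_(m, n)) v :
  qform (X^T *m A *m X) v = qform A (X *m v).
Proof. by rewrite /qform trmx_mul !mulmxA. Qed.

Lemma mxtrace_congr_add_scalar m (X V H : 'M[R]_m) e :
  \tr (X *m (V + e%:M) *m X^T *m H) =
  \tr (X *m V *m X^T *m H) + e * \tr (X *m X^T *m H).
Proof.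
by rewrite mulmxDr mul_mx_scalar !mulmxDl -!scalemxAl mxtraceD mxtraceZ.
Qed.

End ComRingMatrix.

Section SchurComplement.
Variable F : fieldType.
Variable m : nat.
Implicit Type A : 'M[F]_(1 + m).

Definition schur_compl A : 'M[F]_m :=
  drsubmx A - (A 0 0)^-1 *: (dlsubmx A *m ursubmx A).

Lemma ulsubmx_pivot A : ulsubmx A = (A 0 0)%:M.
Proof.
apply/matrixP => i j; rewrite !ord1 !mxE eqxx mulr1n.
by congr (A _ _); apply: val_inj.
Qed.

Lemma schur_decomp A : A 0 0 != 0 ->
  A = (A 0 0)^-1 *: (col_mx (ulsubmx A) (dlsubmx A) *m row_mx (ulsubmx A) (ursubmx A))
      + block_mx 0 0 0 (schur_compl A).
Proof.
move=> a0; rewrite mul_col_row scale_block_mx add_block_mx !addr0 ulsubmx_pivot.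
rewrite /schur_compl addrCA subrr addr0 -{1}(submxK A) ulsubmx_pivot.
by rewrite !mul_scalar_mx mul_mx_scalar !scalerA mulVf // !scale1r.
Qed.

Lemma qform_schur A w : A 0 0 != 0 ->
  qform A (col_mx (- (A 0 0)^-1 *: (ursubmx A *m w)) w) = qform (schur_compl A) w.
Proof.
move=> a0; set v := col_mx _ w.
have rowv0 : row_mx (ulsubmx A) (ursubmx A) *m v = 0.
  by rewrite mul_row_col ulsubmx_pivot mul_scalar_mx scalerA mulrN mulfV // scaleN1r addNr.
rewrite {1}(schur_decomp a0) qformD qformZ qform_block_dr.
by rewrite /qform -!mulmxA rowv0 !mulmx0 mxE mulr0 add0r.
Qed.

Lemma schur_compl_tr A :
  A^T = A -> (schur_compl A)^T = schur_compl A.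
Proof.
move=> As; rewrite /schur_compl linearB /= linearZ /= trmx_mul trmx_drsub.
by rewrite trmx_dlsub trmx_ursub As.
Qed.

End SchurComplement.

Section PositiveTrace.
Variable R : realFieldType.

Lemma qform1_gt0 m (v : 'cV[R]_m) : v != 0 -> 0 < qform 1%:M v.
Proof.
move=> vn0; have sq_ge0 i : 0 <= v^T 0 i * v i 0 by rewrite mxE -expr2 sqr_ge0.
rewrite /qform mulmx1 mxE lt0r sumr_ge0 // andbT; apply: contra vn0 => /eqP.
move=> /(psumr_eq0P (fun i _ => sq_ge0 i)) sq0.
apply/eqP/matrixP => i j; rewrite ord1 mxE.
by apply/eqP; have := sq0 i isT; rewrite mxE -expr2 => /eqP; rewrite sqrf_eq0.
Qed.

Lemma mxtrace_mul_pd_ge0 m (A K : 'M[R]_m) :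
  A^T = A -> (forall v, v != 0 -> 0 < qform A v) -> (forall v, 0 <= qform K v) ->
  0 <= \tr (A *m K).
Proof.
elim: m A K => [|m IH]; first by move=> *; rewrite /mxtrace big_ord0.
rewrite -add1n => A K As Apd Kpsd.
have a_gt0 : 0 < A 0 0.
  rewrite -qform_delta; apply: Apd; apply/eqP => /matrixP/(_ 0 0)/eqP.
  by rewrite !mxE !eqxx oner_eq0.
have a0 : A 0 0 != 0 by rewrite gt_eqF.
have usubA : row_mx (ulsubmx A) (ursubmx A) = (col_mx (ulsubmx A) (dlsubmx A))^T.
  by rewrite tr_col_mx trmx_ulsub trmx_dlsub As.
rewrite {1}(schur_decomp a0) usubA mulmxDl mxtraceD -scalemxAl mxtraceZ.
rewrite mxtrace_outer_mul mxtrace_block_dr_mul.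
apply: addr_ge0; first by rewrite mulr_ge0 ?Kpsd // invr_ge0 ltW.
apply: IH => [|w wn0|w]; first exact: schur_compl_tr.
- by rewrite -qform_schur // Apd // col_mx_eq0 (negbTE wn0) andbF.
- by rewrite -qform_col0 Kpsd.
Qed.

Lemma mxtrace_mul_psd_ge0 m (A K : 'M[R]_m) :
  A^T = A -> (forall v, 0 <= qform A v) -> (forall v, 0 <= qform K v) ->
  0 <= \tr (A *m K).
Proof.
move=> As Apsd Kpsd.
have trK_ge0 : 0 <= \tr K.
  by rewrite -[K]mul1mx mxtrace_mul_pd_ge0 ?trmx1 // => v /qform1_gt0.
have shift_ge0 d : 0 < d -> 0 <= \tr (A *m K) + d * \tr K.
  move=> d_gt0; rewrite -mxtraceZ -mxtraceD -mul_scalar_mx -mulmxDl.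
  apply: mxtrace_mul_pd_ge0 => [|v vn0|//]; first by rewrite linearD /= tr_scalar_mx As.
  by rewrite -scalemx1 qformD qformZ ltr_wpDl // mulr_gt0 // qform1_gt0.
apply/ler_addgt0Pr => e e_gt0.
have d_gt0 : 0 < e / (\tr K + 1) by rewrite divr_gt0 // ltr_wpDl.
apply: le_trans (shift_ge0 _ d_gt0) _; rewrite lerD2l mulrAC.
by rewrite ler_pdivrMr ?ltr_wpDl // ler_wpM2l ?(ltW e_gt0) // lerDl.
Qed.

End PositiveTrace.

Local Open Scope classical_set_scope.
Import numFieldNormedType.Exports.

Lemma cvg_inf_perturb (R : realType) (T : Type) (S : set T) (f g : T -> R) :
  S !=set0 -> has_lbound (f @` S) -> (forall x, S x -> 0 <= g x) ->
  inf [set f x + e * g x | x in S] @[e --> (0 : R)^'+] --> (inf (f @` S) : R^o).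
Proof.
move=> [x0 Sx0] fS_lb g_ge0; set m := inf (f @` S).
have inf_le y : S y -> m <= f y by move=> Sy; apply: ge_inf => //; exists y.
apply/cvgrPdist_lt => eps eps_gt0.
have [_ [x Sx <-] fx_lt] : exists2 r, (f @` S) r & r < m + eps / 2.
  by apply: inf_lt; [exists (f x0), x0 | rewrite ltrDl divr_gt0].
have gx1_gt0 : 0 < g x + 1 by rewrite ltr_wpDl ?g_ge0.
near=> e.
have e_gt0 : 0 < e by near: e; exact: nbhs_right_gt.
have e_lt : e < eps / 2 / (g x + 1).
  by near: e; apply: nbhs_right_lt; rewrite !divr_gt0.
set Se := [set _ | _ in S].
have Se_lb y : Se y -> m <= y.
  move=> [z Sz <-]; rewrite -[m]addr0 lerD ?inf_le //.
  by rewrite mulr_ge0 ?g_ge0 // ltW.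
have m_le : m <= inf Se by apply: lb_le_inf => //; exists (f x0 + e * g x0), x0.
have inf_Se_le : inf Se <= f x + e * g x by apply: ge_inf; [exists m | exists x].
have egx_lt : e * g x < eps / 2.
  rewrite ltr_pdivlMr // in e_lt; apply: le_lt_trans e_lt.
  by rewrite ler_wpM2l ?(ltW e_gt0) // lerDl.
rewrite distrC ger0_norm ?subr_ge0 //; lra.
Unshelve. all: by end_near.
Qed.

Section TraceFunctional.
Variable R : realType.

Lemma psd_mx1 m : psd_mx (1%:M : 'M[R]_m).
Proof.
split=> [|v]; first exact: trmx1.
by have [->|/qform1_gt0/ltW//] := eqVneq v 0; rewrite mulmx0 mxE.
Qed.

Lemma pd_mx_psd m (H : 'M[R]_m) : pd_mx H -> psd_mx H.
Proof.
move=> [Hs Hpd]; split=> // v.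
by have [->|/Hpd/ltW//] := eqVneq v 0; rewrite mulmx0 mxE.
Qed.

Lemma mxtrace_congr_ge0 m (X V H : 'M[R]_m) :
  psd_mx V -> psd_mx H -> 0 <= \tr (X *m V *m X^T *m H).
Proof.
move=> [Vs Vpsd] [_ Hpsd].
rewrite -!mulmxA mxtrace_mulC -mulmxA.
by apply: mxtrace_mul_psd_ge0 => // v; rewrite qform_congr; apply: Hpsd.
Qed.

Lemma mxtrace_gram_ge0 m (X H : 'M[R]_m) : psd_mx H -> 0 <= \tr (X *m X^T *m H).
Proof. by move=> Hpsd; have := mxtrace_congr_ge0 X (psd_mx1 m) Hpsd; rewrite mulmx1. Qed.

Lemma G_set1 g n : @G_set R g n 1%:M.
Proof. by case: g; rewrite /= /SL_set /Sp_set /= ?det1 ?trmx1 ?mul1mx ?mulmx1. Qed.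

End TraceFunctional.

Theorem mainTheorem4 (R : realType) (n : nat) (g : group_choice)
    (V H : 'M[R]_(n + n)) :
  (1 <= n)%N -> psd_mx V -> pd_mx H ->
  trace_inf g (V + eps%:M) H @[eps --> (0 : R)^'+] --> (trace_inf g V H : R^o).
Proof.
move=> _ Vpsd /pd_mx_psd Hpsd.
pose f (X : 'M[R]_(n + n)) := \tr (X *m V *m X^T *m H).
pose h (X : 'M[R]_(n + n)) := \tr (X *m X^T *m H).
have -> : (fun eps => trace_inf g (V + eps%:M) H) =
          (fun eps => inf [set f X + eps * h X | X in @G_set R g n]).
  by apply/funext => eps; congr inf; apply: eq_imagel => X _; apply: mxtrace_congr_add_scalar.
apply: cvg_inf_perturb => [|//|X _].
- by exists 1%:M; apply: G_set1.
- by exists 0 => _ [X _ <-]; apply: mxtrace_congr_ge0.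
- exact: mxtrace_gram_ge0.
Qed.
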